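(* Let $\mathcal{C}$ be an exact-repair regenerating code with parameters $\{(n=d+1,k,d),(\alpha,\beta),B\}$, where $\alpha=(d-p+1)\beta-\theta$ with $p\in\{1,\dots,k\}$, $\theta\in[0,\beta)$ ($\theta=0$ if $p=k$), and let $\epsilon=\hat B-B$. Let $1\le i\le j\le k$, $L=[i\ j]$, and $$\mathcal{S}=\{S_{i+1}^{i}\}\cup S_{i+2}^{[i\ i+1]}\cup\cdots\cup S_{j}^{[i\ j-1]}\cup S_{[j+1\ d+1]}^{L},$$ i.e. $\mathcal{S}=\{S_x^y : y\in L,\ x\in[d+1],\ x>y\}$. Then $$H(\mathcal{S})\ \ge\ \sum_{\ell=i}^{j}\min\{\alpha,(d-\ell+1)\beta\}-\epsilon .$$
   Context: Setting: fix integers $1\le k\le d$, let $n=d+1$, a finite field $\mathbb{F}_q$, and reals $\alpha,\beta>0$. An exact-repair regenerating code with parameters $\{(n,k,d),(\alpha,\beta),B\}$: a file $M$ uniformly distributed over $\mathbb{F}_q^B$ (entropies are measured in units of $\log q$); node $i\in[n]$ stores $W_i$, a deterministic function of $M$, with $H(W_i)\le\alpha$; (data collection) for every $K\subseteq[n]$ with $|K|=k$, $M$ is a function of $(W_a)_{a\in K}$; (exact repair) since $n=d+1$, the helper set of node $y$ is $[n]\setminus\{y\}$: each $x\ne y$ sends helper data $S_x^y$, a deterministic function of $W_x$ with $H(S_x^y)\le\beta$, and $W_y$ is a function of $(S_x^y)_{x\neq y}$. Notation: $[i]=\{1,\dots,i\}$, $[i\ j]=\{i,i+1,\dots,j\}$;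 for $A\subseteq[n]$, $W_A=(W_a)_{a\in A}$; for $X,Y\subseteq[n]$, $S_X^Y=\{S_x^y: x\in X, y\in Y, x\ne y\}$; $S_x^Y=S_{\{x\}}^Y$. The functional-repair optimal file size is $\hat B=\sum_{i=1}^k\min\{\alpha,(d-i+1)\beta\}=p\alpha+\sum_{i=p+1}^k(d-i+1)\beta$, and $\epsilon:=\hat B-B$. *)

From Stdlib Require Import Reals.
From mathcomp Require Import all_boot all_algebra.

Set Implicit Arguments.
Unset Strict Implicit.
Unset Printing Implicit Defensive.

Local Open Scope R_scope.

(* Entropy, measured in units of log q, of a random variable f(M) where M is
   uniformly distributed on the finite type T:
   H(f(M)) = sum_t (1/|T|) * log_q (|T| / |{t' | f t' = f t}|). *)
Definition entropy (q : nat) (T : finType) (U : eqType) (f : T -> U) : R :=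
  \big[Rplus/R0]_(t : T)
     ((ln (INR #|T|) - ln (INR #|[set t' | f t' == f t]|))
        / (INR #|T| * ln (INR q))).

Definition file (F : finFieldType) (B : nat) := {ffun 'I_B -> F}.

Definition Wjoint (F : finFieldType) (B n : nat) (Wt : eqType)
  (W : 'I_n -> {ffun 'I_B -> F} -> Wt) (K : {set 'I_n}) (m : {ffun 'I_B -> F})
  : {ffun 'I_n -> option Wt} :=
  [ffun a => if a \in K then Some (W a m) else None].

Definition Sjoint (F : finFieldType) (B n : nat) (Wt St : eqType)
  (W : 'I_n -> {ffun 'I_B -> F} -> Wt) (h : 'I_n -> 'I_n -> Wt -> St)
  (P : {set 'I_n * 'I_n}) (m : {ffun 'I_B -> F})
  : {ffun 'I_n * 'I_n -> option St} :=
  [ffun e => if e \in P then Some (h e.1 e.2 (W e.1 m)) else None].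

Definition helpers (F : finFieldType) (B n : nat) (Wt St : eqType)
  (W : 'I_n -> {ffun 'I_B -> F} -> Wt) (h : 'I_n -> 'I_n -> Wt -> St)
  (y : 'I_n) (m : {ffun 'I_B -> F}) : {ffun 'I_n -> option St} :=
  [ffun x => if x != y then Some (h x y (W x m)) else None].

(* Exact-repair regenerating code with parameters (n = d+1, k, d), (alpha, beta), B
   over the finite field F (q = #|F|): node i stores W i M, a deterministic
   function of M; node x sends S_x^y = h x y (W x M) to repair node y. *)
Definition ER_code (F : finFieldType) (k d : nat) (alpha beta : R) (B : nat)
  (Wt St : eqType) (W : 'I_d.+1 -> {ffun 'I_B -> F} -> Wt)
  (h : 'I_d.+1 -> 'I_d.+1 -> Wt -> St) : Prop :=
  (forall a, entropy #|F| (W a) <= alpha) /\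
  (forall K : {set 'I_d.+1}, #|K| = k ->
     exists dec : {ffun 'I_d.+1 -> option Wt} -> {ffun 'I_B -> F},
       forall m, dec (Wjoint W K m) = m) /\
  (forall x y : 'I_d.+1, x != y ->
     entropy #|F| (fun m : {ffun 'I_B -> F} => h x y (W x m)) <= beta) /\
  (forall y : 'I_d.+1,
     exists rep : {ffun 'I_d.+1 -> option St} -> Wt,
       forall m, rep (helpers W h y m) = W y m).

(* Functional-repair optimal file size  B^ = sum_{i=1}^k min(alpha, (d-i+1) beta). *)
Definition Bhat (k d : nat) (alpha beta : R) : R :=
  \big[Rplus/R0]_(1 <= i < k.+1) Rmin alpha (INR (addn (subn d i) 1) * beta).

From Stdlib Require Import Reals Lra.
From mathcomp Require Import all_boot all_order all_algebra Rstruct zify.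
Set Implicit Arguments. Unset Strict Implicit. Unset Printing Implicit Defensive.
Import Order.TTheory GRing.Theory Num.Theory.
Local Open Scope R_scope.

(* Write P_a for
   the joint content W_[a] of the first a nodes and c_l = min(alpha,(d-l+1)beta).
   - B = H(M) <= H(P_k), since the file is decodable from nodes 1..k;
   - H(P_l) <= H(P_(l-1)) + c_l: node l stores at most alpha, and it is also
     recovered from P_(l-1) and the d-l+1 helper symbols S_x^l with x > l;
     telescoping gives H(P_k) <= H(P_j) + sum_(l=j+1..k) c_l and
     H(P_(i-1)) <= sum_(l=1..i-1) c_l (as H(P_0) = 0);
   - H(P_j) <= H(P_(i-1)) + H(S): repairing nodes i, ..., j in this order
     only uses P_(i-1) and the helper data S of the statement.
   Adding these yields H(S) >= sum_(l=i..j) c_l - (Bhat - B). *)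

Lemma ln_le x y : 0 < x -> x <= y -> ln x <= ln y.
Proof. by move=> hx [hxy|->]; [left; exact: ln_increasing | right]. Qed.

Lemma ln_le_sub1 x : 0 < x -> ln x <= x - 1.
Proof. by move=> hx; have := exp_ineq1_le (ln x); rewrite exp_ln //; lra. Qed.

Lemma ln_gt0 x : 1 < x -> 0 < ln x.
Proof. by move=> hx; rewrite -ln_1; apply: ln_increasing; lra. Qed.

Lemma Rsum_le (I : finType) (P : pred I) (f g : I -> R) :
  (forall i, P i -> f i <= g i) ->
  \big[Rplus/R0]_(i | P i) f i <= \big[Rplus/R0]_(i | P i) g i.
Proof.
move=> fg; apply: (big_ind2 (fun a b => a <= b)) => //; first exact: Rle_refl.
by move=> *; apply: Rplus_le_compat.
Qed.

Lemma Rsum_const (I : finType) (A : pred I) c :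
  \big[Rplus/R0]_(i in A) c = INR #|A| * c.
Proof. by rewrite big_const; elim: #|A| => [|n IH]; rewrite ?iterS ?IH ?S_INR /=; lra. Qed.

Lemma Rsum_const_all (I : finType) c : \big[Rplus/R0]_(i : I) c = INR #|I| * c.
Proof. exact: (Rsum_const I c). Qed.

Section Entropy.
Variables (T : finType) (q : nat).
Hypothesis q_gt1 : (1 < q)%N.
Hypothesis T_gt0 : (0 < #|T|)%N.

Definition fibre (U : eqType) (f : T -> U) t := #|[set t' | f t' == f t]|.

Lemma fibre_pos (U : eqType) (f : T -> U) t : 0 < INR (fibre f t).
Proof. by apply: lt_0_INR; apply/ssrnat.ltP/card_gt0P; exists t; rewrite inE. Qed.

Lemma card_T_pos : 0 < INR #|T|.
Proof. exact/lt_0_INR/ssrnat.ltP. Qed.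

Lemma ln_q_pos : 0 < ln (INR q).
Proof. by apply: ln_gt0; apply: (lt_INR 1); apply/ssrnat.ltP. Qed.

Definition raw_entropy (U : eqType) (f : T -> U) :=
  \big[Rplus/R0]_t (ln (INR #|T|) - ln (INR (fibre f t))).

Lemma entropyE (U : eqType) (f : T -> U) :
  entropy q f = raw_entropy f / (INR #|T| * ln (INR q)).
Proof. by rewrite /entropy /raw_entropy /Rdiv big_distrl. Qed.

Lemma inv_norm_ge0 : 0 <= / (INR #|T| * ln (INR q)).
Proof. exact/Rlt_le/Rinv_0_lt_compat/Rmult_lt_0_compat/ln_q_pos/card_T_pos. Qed.

(* A function of f(M) has no more entropy than f(M): its fibres are coarser. *)
Lemma entropy_mono (U V : eqType) (f : T -> U) (g : T -> V) :
  (forall t t', f t = f t' -> g t = g t') -> entropy q g <= entropy q f.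
Proof.
move=> gf; rewrite !entropyE /Rdiv.
apply: Rmult_le_compat_r inv_norm_ge0 _; apply: Rsum_le => t _.
suff : ln (INR (fibre f t)) <= ln (INR (fibre g t)) by lra.
apply: ln_le; first exact: fibre_pos.
apply/le_INR/ssrnat.leP/subset_leq_card/subsetP => t'.
by rewrite !inE => /eqP /gf ->.
Qed.

(* Counting form of Gibbs' inequality for a pair (f, g):
   sum_t |f-fibre| |g-fibre| / |(f,g)-fibre| <= |T|^2.  Both sides count
   pairs (u, v); a pair contributes at most 1 on the left. *)
Lemma fibre_pair_count (U V : eqType) (f : T -> U) (g : T -> V) :
  (\sum_t (fibre f t)%:R * (fibre g t)%:R / (fibre (fun x => (f x, g x)) t)%:R
     <= (#|T| * #|T|)%:R :> R)%R.
Proof.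
set fg := fun x => (f x, g x).
have pairs_of t : ((fibre f t)%:R * (fibre g t)%:R / (fibre fg t)%:R =
   \sum_(uv : T * T) (if (f uv.1 == f t) && (g uv.2 == g t)
                      then ((fibre fg t)%:R)^-1 else 0) :> R)%R.
  rewrite -big_mkcond /= -natrM /fibre -cardsX.
  rewrite (eq_bigl (mem (setX [set t' | f t' == f t] [set t' | g t' == g t]))).
    by rewrite sumr_const mulr_natl.
  by move=> [u v]; rewrite !inE.
rewrite (eq_bigr _ (fun t _ => pairs_of t)) exchange_big /=.
rewrite -card_prod -sum1_card natr_sum; apply: ler_sum => -[u v] _ /=.
set P := [set t | (f t == f u) && (g t == g v)].
have fibreP t : t \in P -> fibre fg t = #|P|.
  rewrite inE => /andP [/eqP ftu /eqP gtv]; apply: eq_card => t'.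
  by rewrite !inE /fg xpair_eqE ftu gtv.
rewrite (eq_bigr (fun t => if t \in P then (#|P|%:R)^-1 else 0)%R); last first.
  move=> t _; rewrite inE eq_sym [g v == _]eq_sym.
  by case: ifP => // tP; rewrite fibreP // inE.
rewrite -big_mkcond /= sumr_const.
have [->|nz] := eqVneq #|P| 0%N; first by rewrite mulr0n ler01.
by rewrite -[(_^-1 *+ _)%R]mulr_natr mulVf ?lexx // pnatr_eq0.
Qed.

(* Subadditivity H(f, g) <= H(f) + H(g) of raw entropies, from ln x <= x - 1
   applied at every outcome and the count above. *)
Lemma raw_entropy_pair_le (U V : eqType) (f : T -> U) (g : T -> V) :
  raw_entropy (fun x => (f x, g x)) <= raw_entropy f + raw_entropy g.
Proof.
set N := INR #|T|; set fg := fun x => (f x, g x).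
have N_pos : 0 < N := card_T_pos.
set y := fun t => INR (fibre f t) * INR (fibre g t) / INR (fibre fg t).
have gibbs t : ln N - ln (INR (fibre fg t)) <=
    (ln N - ln (INR (fibre f t))) + (ln N - ln (INR (fibre g t))) + (y t / N - 1).
  have hf := fibre_pos f t; have hg := fibre_pos g t; have hfg := fibre_pos fg t.
  have hfg' := Rinv_0_lt_compat _ hfg.
  have hN' := Rinv_0_lt_compat _ N_pos.
  have hprod := Rmult_lt_0_compat _ _ hf hg.
  have hy := Rmult_lt_0_compat _ _ hprod hfg'.
  have := ln_le_sub1 (Rmult_lt_0_compat _ _ hy hN'); rewrite /y /Rdiv.
  rewrite !ln_mult // !ln_Rinv //; lra.
have sum_y : \big[Rplus/R0]_t y t <= N * N.
  have := fibre_pair_count f g; rewrite natrM -!INRE => /RleP.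
  by apply: Rle_trans; right; apply: eq_bigr => t _; rewrite /y !INRE.
have sum_gibbs : raw_entropy fg <= raw_entropy f + raw_entropy g +
    ((\big[Rplus/R0]_t y t) / N - N).
  apply: Rle_trans (Rsum_le (fun t _ => gibbs t)) _; right.
  rewrite /raw_entropy /Rminus !big_split /= -big_distrl /=.
  by rewrite (Rsum_const_all _ (- (1))) -/N /Rdiv; lra.
have : (\big[Rplus/R0]_t y t) / N <= N.
  by apply: (Rmult_le_reg_r N) => //; rewrite /Rdiv Rmult_assoc Rinv_l; lra.
lra.
Qed.

Lemma entropy_pair_le (U V : eqType) (f : T -> U) (g : T -> V) :
  entropy q (fun x => (f x, g x)) <= entropy q f + entropy q g.
Proof.
rewrite !entropyE /Rdiv -Rmult_plus_distr_r.
exact: Rmult_le_compat_r inv_norm_ge0 (raw_entropy_pair_le f g).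
Qed.

Lemma entropy_const (U : eqType) (f : T -> U) :
  (forall t t', f t = f t') -> entropy q f = 0.
Proof.
move=> fconst; rewrite entropyE /raw_entropy.
rewrite (eq_bigr (fun _ => 0)); first by rewrite Rsum_const_all /Rdiv; lra.
move=> t _; rewrite /fibre (_ : [set t' | f t' == f t] = setT) ?cardsT; first lra.
by apply/setP => t'; rewrite !inE (fconst t' t) eqxx.
Qed.

Lemma entropy_id : entropy q (fun t : T => t) = ln (INR #|T|) / ln (INR q).
Proof.
rewrite entropyE /raw_entropy (eq_bigr (fun _ => ln (INR #|T|))); last first.
  move=> t _; rewrite /fibre (_ : [set t' | t' == t] = [set t]) ?cards1 ?ln_1; first lra.
  by apply/setP => t'; rewrite !inE.
rewrite Rsum_const_all.
have hT := card_T_pos; have hq := ln_q_pos.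
by field; split; apply: Rgt_not_eq.
Qed.

Lemma entropy_family_le (I : finType) (U : eqType) (g : I -> T -> U) (P : {set I}) :
  entropy q (fun t => [ffun e => if e \in P then Some (g e t) else None])
    <= \big[Rplus/R0]_(e in P) entropy q (g e).
Proof.
have [c] := ubnP #|P|; elim: c P => // c IH P; rewrite ltnS => card_P.
have [->|[e eP]] := set_0Vmem P.
  rewrite big_set0 entropy_const; first exact: Rle_refl.
  by move=> t t'; apply/ffunP => e; rewrite !ffunE inE.
rewrite (big_setD1 e eP) /=.
set joint := fun (A : {set I}) t => [ffun e => if e \in A then Some (g e t) else None].
apply: (@Rle_trans _ (entropy q (fun t => (joint (P :\ e) t, g e t)))).
  apply: entropy_mono => t t' [jt gt]; apply/ffunP => e'; rewrite !ffunE.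
  have [->|ne] := eqVneq e' e; first by rewrite eP gt.
  move/ffunP: jt => /(_ e'); rewrite !ffunE !inE ne /=.
  by case: (e' \in P) => // -[->].
apply: Rle_trans (entropy_pair_le _ _) _; rewrite Rplus_comm.
apply: Rplus_le_compat_l; apply: IH.
by rewrite (cardsD1 e P) eP in card_P.
Qed.

End Entropy.

Lemma card_file_gt0 (F : finFieldType) (B : nat) : (0 < #|{ffun 'I_B -> F}|)%N.
Proof. by rewrite card_ffun expn_gt0 (ltn_trans _ (card_finNzRing_gt1 F)). Qed.

Lemma entropy_file (F : finFieldType) (B : nat) :
  entropy #|F| (fun m : {ffun 'I_B -> F} => m) = INR B.
Proof.
have q_gt1 := card_finNzRing_gt1 F.
rewrite (entropy_id q_gt1 (card_file_gt0 F B)) card_ffun card_ord.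
have -> : INR (#|F| ^ B)%N = INR #|F| ^ B.
  by elim: B => // n IH; rewrite expnS -multE mult_INR IH. rewrite ln_pow; last by apply/lt_0_INR/ssrnat.ltP/(ltn_trans _ q_gt1).
have := ln_q_pos q_gt1 => hq.
by rewrite /Rdiv Rmult_assoc Rinv_r ?Rmult_1_r //; exact: Rgt_not_eq.
Qed.

Lemma card_ord_lt n m : (m <= n)%N -> #|[set a : 'I_n | (a < m)%N]| = m.
Proof.
move=> mn; have widen_inj : injective (widen_ord mn) by move=> a b /(congr1 val) ab; exact: val_inj.
rewrite -[RHS](card_ord m) -(card_imset _ widen_inj).
apply: eq_card => a; rewrite inE; apply/idP/imsetP => [am | [b _ ->]]; last exact: (ltn_ord b).
by exists (Ordinal am) => //; apply: val_inj.
Qed.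

Lemma card_ord_gt n (y : 'I_n) : #|[set x : 'I_n | (y < x)%N]| = (n - y.+1)%N.
Proof.
rewrite cardsCs card_ord -[in RHS](card_ord_lt (ltn_ord y)); congr (_ - _)%N.
by apply: eq_card => x; rewrite !inE ltnNge negbK ltnS.
Qed.

Lemma Bhat_split (k d : nat) (alpha beta : R) (i j : nat) :
  (1 <= i <= j)%N -> (j <= k)%N ->
  Bhat k d alpha beta =
    \big[Rplus/R0]_(1 <= l < i) Rmin alpha (INR (d - l + 1) * beta)
    + (\big[Rplus/R0]_(i <= l < j.+1) Rmin alpha (INR (d - l + 1) * beta)
       + \big[Rplus/R0]_(j.+1 <= l < k.+1) Rmin alpha (INR (d - l + 1) * beta)).
Proof.
move=> /andP [i1 ij] jk.
rewrite /Bhat (@big_cat_nat _ _ _ i 1 k.+1) //; last by lia.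
by rewrite (@big_cat_nat _ _ _ j.+1 i k.+1) //; lia.
Qed.

Section Code.
Variables (F : finFieldType) (k d : nat) (alpha beta : R) (B : nat)
  (Wt St : eqType) (W : 'I_d.+1 -> {ffun 'I_B -> F} -> Wt)
  (h : 'I_d.+1 -> 'I_d.+1 -> Wt -> St).
Hypothesis code : @ER_code F k d alpha beta B Wt St W h.

Local Notation ent := (@entropy #|F| {ffun 'I_B -> F} _).
Local Notation cap l := (Rmin alpha (INR (d - l + 1) * beta)).

Let q_gt1 : (1 < #|F|)%N := card_finNzRing_gt1 F.
Let file_gt0 : (0 < #|{ffun 'I_B -> F}|)%N := card_file_gt0 F B.

Let storage_bound : forall a, ent (W a) <= alpha := code.1.
Let data_collection : forall K : {set 'I_d.+1}, #|K| = k ->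
    exists dec : {ffun 'I_d.+1 -> option Wt} -> {ffun 'I_B -> F},
      forall m, dec (Wjoint W K m) = m := code.2.1.
Let helper_bound : forall x y : 'I_d.+1, x != y ->
    ent (fun m => h x y (W x m)) <= beta := code.2.2.1.
Let exact_repair : forall y : 'I_d.+1,
    exists rep : {ffun 'I_d.+1 -> option St} -> Wt,
      forall m, rep (helpers W h y m) = W y m := code.2.2.2.

Definition prefix (a : nat) := Wjoint W [set x : 'I_d.+1 | (x < a)%N].

(* The helper data S_x^y sent to the (1-based) nodes y in [i, j] by nodes x > y. *)
Definition down_helpers (i j : nat) : {set 'I_d.+1 * 'I_d.+1} :=
  [set e : 'I_d.+1 * 'I_d.+1 | (i <= e.2.+1 <= j)%N && (e.2 < e.1)%N].

Lemma prefix0_entropy : ent (prefix 0) = 0.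
Proof. by apply: entropy_const => m m'; apply/ffunP => a; rewrite !ffunE inE. Qed.

(* Data collection from nodes 1..k: the file is a function of P_k. *)
Lemma file_le_prefix_entropy : (k <= d)%N -> INR B <= ent (prefix k).
Proof.
move=> kd; rewrite -(entropy_file F B); apply: entropy_mono => // m m' eq_m.
have [dec decK] := data_collection (card_ord_lt (ltnW (leq_ltn_trans kd (ltnSn d)))).
by rewrite -(decK m) -(decK m'); congr dec.
Qed.

(* Exact repair of nodes i, ..., j in increasing order: each node y is
   rebuilt from the nodes below it (in P_(i-1) or already repaired) and
   from the helpers above it (in S). *)
Lemma prefix_of_down_helpers (i j : nat) m m' : (1 <= i)%N ->
  prefix i.-1 m = prefix i.-1 m' ->
  Sjoint W h (down_helpers i j) m = Sjoint W h (down_helpers i j) m' ->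
  prefix j m = prefix j m'.
Proof.
move=> i1 same_prefix same_helpers.
suff eqW c (y : 'I_d.+1) : (y < c)%N -> (y < j)%N -> W y m = W y m'.
  apply/ffunP => a; rewrite !ffunE inE; case: ifP => // aj.
  by rewrite (eqW a.+1 a).
elim: c y => [//|c IH] y; rewrite ltnS => yc yj.
have [yi|iy] := ltnP y i.-1.
  by move/ffunP: same_prefix => /(_ y); rewrite !ffunE inE yi => -[].
have [rep repK] := exact_repair y.
rewrite -(repK m) -(repK m'); congr rep; apply/ffunP => x; rewrite !ffunE.
case: ifP => // xy; case: (ltngtP x y) => [xlt|ylt|xeq].
- by rewrite (IH x) //; lia.
- move/ffunP: same_helpers => /(_ (x, y)); rewrite !ffunE inE /= ylt andbT.
  by have -> : (i <= y.+1 <= j)%N by apply/andP; split; lia.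
- by move: xy; rewrite (val_inj xeq) eqxx.
Qed.

Lemma prefix_entropy_le_down_helpers (i j : nat) : (1 <= i)%N ->
  ent (prefix j) <= ent (prefix i.-1) + ent (Sjoint W h (down_helpers i j)).
Proof.
move=> i1; apply: Rle_trans (entropy_pair_le q_gt1 file_gt0 _ _).
apply: entropy_mono => // m m' [same_prefix same_helpers].
exact: prefix_of_down_helpers same_prefix same_helpers.
Qed.

Lemma helpers_entropy_le (P : {set 'I_d.+1 * 'I_d.+1}) :
  (forall e, e \in P -> e.1 != e.2) -> ent (Sjoint W h P) <= INR #|P| * beta.
Proof.
move=> offdiag; rewrite -Rsum_const.
apply: Rle_trans (entropy_family_le q_gt1 file_gt0 _ _) _.
by apply: Rsum_le => e /offdiag; exact: helper_bound.
Qed.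

Lemma card_down_helpers1 (l : 'I_d.+1) : #|down_helpers l.+1 l.+1| = (d - l)%N.
Proof.
have -> : down_helpers l.+1 l.+1 = setX [set x : 'I_d.+1 | (l < x)%N] [set l].
  apply/setP => -[x y]; rewrite !inE /=.
  apply/idP/idP => [/andP [/andP [ly yl] yx] | /andP [lx /eqP ->]].
    have yl' : y = l by apply: val_inj => /=; lia.
    by rewrite yl' eqxx andbT -yl'.
  by rewrite leqnn lx.
by rewrite cardsX cards1 card_ord_gt; lia.
Qed.

Lemma prefix_entropy_step l : (1 <= l <= d)%N ->
  ent (prefix l) <= ent (prefix l.-1) + cap l.
Proof.
move=> /andP [l1 ld].
have hl : (l.-1 < d.+1)%N by lia.
set y := Ordinal hl.
have by_storage : ent (prefix l) <= ent (prefix l.-1) + alpha.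
  apply: Rle_trans (Rplus_le_compat_l _ _ _ (storage_bound y)).
  apply: Rle_trans (entropy_pair_le q_gt1 file_gt0 _ (W y)).
  apply: entropy_mono => // m m' [same_prefix same_W]; apply/ffunP => a.
  rewrite !ffunE !inE.
  have [al | la] := ltnP a l.-1.
    have -> : (a < l)%N by lia.
    by move/ffunP: same_prefix => /(_ a); rewrite !ffunE !inE al.
  case: ifP => // al; have -> : a = y by apply: val_inj => /=; lia.
  by rewrite same_W.
have by_repair : ent (prefix l) <= ent (prefix l.-1) + INR (d - l + 1) * beta.
  have card_l : (d - l + 1)%N = #|down_helpers l l|.
    have -> : l = y.+1 by rewrite /= prednK.
    by rewrite card_down_helpers1 /=; lia.
  rewrite card_l; apply: Rle_trans (prefix_entropy_le_down_helpers l l1) _.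
  apply: Rplus_le_compat_l; apply: helpers_entropy_le => e.
  by rewrite inE => /andP [_ lt]; rewrite -(inj_eq val_inj) gtn_eqF.
suff : ent (prefix l) - ent (prefix l.-1) <= cap l by lra.
by apply: Rmin_glb; lra.
Qed.

Lemma prefix_entropy_telescope a b : (a <= b)%N -> (b <= d)%N ->
  ent (prefix b) <= ent (prefix a) + \big[Rplus/R0]_(a.+1 <= l < b.+1) cap l.
Proof.
elim: b => [|b IH] ab bd.
  have -> : a = 0%N by lia.
  by rewrite big_geq //; lra.
have [ab'|ba|->] := ltngtP a b.+1; last by rewrite big_geq //; lra.
- rewrite big_nat_recr /=; last by lia.
  have := IH ab' (ltnW bd); have := @prefix_entropy_step b.+1 ltac:(lia).
  simpl; lra.
- by lia.
Qed.

End Code.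

Theorem proposition1 (F : finFieldType) (k d p : nat) (alpha beta theta : R)
  (B : nat) (Wt St : eqType) (W : 'I_d.+1 -> {ffun 'I_B -> F} -> Wt)
  (h : 'I_d.+1 -> 'I_d.+1 -> Wt -> St) (i j : nat) :
  (1 <= k <= d)%N ->
  Rlt R0 alpha -> Rlt R0 beta ->
  (1 <= p <= k)%N ->
  Rle R0 theta -> Rlt theta beta ->
  (p = k -> theta = R0) ->
  alpha = Rminus (Rmult (INR (addn (subn d p) 1)) beta) theta ->
  @ER_code F k d alpha beta B Wt St W h ->
  (1 <= i <= j)%N -> (j <= k)%N ->
  Rge (entropy #|F|
         (Sjoint W h [set e : 'I_d.+1 * 'I_d.+1 |
                        (i <= e.2.+1 <= j)%N && (e.2 < e.1)%N]))
      (Rminus (\big[Rplus/R0]_(i <= l < j.+1)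
                 Rmin alpha (Rmult (INR (addn (subn d l) 1)) beta))
              (Rminus (Bhat k d alpha beta) (INR B))).
Proof.
move=> /andP [_ kd] _ _ _ _ _ _ _ code ij jk.
have i1 : (1 <= i)%N by case/andP: ij.
have file_le := file_le_prefix_entropy code kd.
have top := prefix_entropy_telescope code jk kd.
have bottom := prefix_entropy_telescope code (leq0n i.-1) ltac:(lia).
have middle := prefix_entropy_le_down_helpers code j i1.
rewrite prefix0_entropy prednK // in bottom.
rewrite (Bhat_split _ _ _ ij jk) /down_helpers in middle *.
set HS := entropy _ (Sjoint W h _) in middle *.
apply: Rle_ge; lra.
Qed.
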